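(* Let $n\geq 0$ and $r\geq 0$ be integers and let $k\in\mathbf{Z}$. Then \begin{align*} \tilde{A}_{n}^{(r,k)}(x)=\sum_{j=0}^{n}\Bigg\{\sum_{l=0}^{n-j}\sum_{a=0}^{n-j-l}\binom{n}{l+j}\binom{n-j-l}{a}S_{1}(l+j,j)\,B_{a}^{(a-r+1)}(1-r)\,\tilde{C}_{n-j-l-a}^{(k)}\Bigg\}x^{j}. \end{align*}
   Context: For $k\in\mathbf{Z}$, $Lif_{k}(x)=\sum_{m=0}^{\infty}\frac{x^{m}}{m!(m+1)^{k}}$. For integers $r\geq 0$, $k\in\mathbf{Z}$, the polynomials $\tilde{A}_{n}^{(r,k)}(x)$ are defined by \[\left(\frac{t}{(1+t)\log(1+t)}\right)^{r}Lif_{k}\left(-\log(1+t)\right)(1+t)^{x}=\sum_{n=0}^{\infty}\tilde{A}_{n}^{(r,k)}(x)\frac{t^{n}}{n!}.\] The poly-Cauchy numbers of the second kind $\tilde{C}_{n}^{(k)}$ are defined by $Lif_{k}\left(-\log(1+t)\right)=\sum_{n=0}^{\infty}\tilde{C}_{n}^{(k)}\frac{t^{n}}{n!}$. For an integer $\alpha$ (possibly negative), the Bernoulli polynomials of order $\alpha$ are defined by $\left(\frac{t}{e^{t}-1}\right)^{\alpha}e^{xt}=\sum_{n=0}^{\infty}B_{n}^{(\alpha)}(x)\frac{t^{n}}{n!}$. $S_{1}(n,m)$ denotes the signed Stirling numbers of the first kind, defined by $x(x-1)\cdots(x-n+1)=\sum_{m=0}^{n}S_{1}(n,m)x^{m}$.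 *)

(* Generating functions are treated as formal power series,
   represented by their coefficient sequences nat -> R. *)
From HB Require Import structures.
From mathcomp Require Import all_boot all_order all_algebra.
Set Implicit Arguments. Unset Strict Implicit. Unset Printing Implicit Defensive.
Import Order.TTheory GRing.Theory Num.Theory.
Local Open Scope ring_scope.

Definition fps (R : Type) := nat -> R.

Section Fps.
Variable R : pzRingType.
Definition fps_one : fps R := fun n => (n == 0%N)%:R.
Definition fps_mul (f g : fps R) : fps R :=
  fun n => \sum_(i < n.+1) f i * g (n - i)%N.
Definition fps_pow (f : fps R) (m : nat) : fps R := iter m (fps_mul f) fps_one.
(* composition f(g(t)), meaningful when g has zero constant term *)
Definition fps_comp (f g : fps R) : fps R :=
  fun n => \sum_(m < n.+1) f m * fps_pow g m n.
(* multiplicative inverse of a series with constant term 1: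
   1/(1+u) = sum_m (-1)^m u^m, where u = f - 1 *)
Definition fps_inv1 (f : fps R) : fps R :=
  fps_comp (fun m => (-1) ^+ m) (fun n => if n == 0%N then 0 else f n).
End Fps.

Definition log1p : fps rat :=
  fun n => if n == 0%N then 0 else (-1) ^+ n.+1 / n%:R.

Definition lif (k : int) : fps rat :=
  fun m => (m`!%:R * (m.+1%:R : rat) ^ k)^-1.

Definition cauchy2_gf (k : int) : fps rat :=
  fps_comp (lif k) (fun n => - log1p n).

Definition C2 (k : int) (n : nat) : rat := n`!%:R * cauchy2_gf k n.

Definition expm1_div_t : fps rat := fun n => (n.+1`!%:R)^-1.

(* (t/(e^t-1))^alpha e^{x t}, alpha an integer *)
Definition bern_gf (alpha : int) (x : rat) : fps rat :=
  fps_mul (match alpha with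
           | Posz m => fps_pow (fps_inv1 expm1_div_t) m
           | Negz m => fps_pow expm1_div_t m.+1
           end)
          (fun n => x ^+ n / n`!%:R).

Definition bernoulliB (n : nat) (alpha : int) (x : rat) : rat :=
  n`!%:R * bern_gf alpha x n.

Definition S1 (n m : nat) : rat :=
  (\prod_(i < n) ('X - (i%:R)%:P) : {poly rat})`_m.

(* t / ((1+t) log(1+t)) = 1 / ((1+t) * (log(1+t)/t)) *)
Definition tdiv_log_gf : fps rat :=
  fps_inv1 (fps_mul (fun n => (n <= 1)%N%:R) (fun n => (-1) ^+ n / n.+1%:R)).

(* (1+t)^x = exp(x log(1+t)), with coefficients polynomials in x *)
Definition onept_pow_x : fps {poly rat} :=
  fps_comp (fun n => ((n`!%:R : rat)^-1)%:P) (fun n => 'X * (log1p n)%:P).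

Definition Atilde_gf (r : nat) (k : int) : fps {poly rat} :=
  fps_mul (fun n => (fps_mul (fps_pow tdiv_log_gf r) (cauchy2_gf k) n)%:P)
          onept_pow_x.

Definition Atilde (n r : nat) (k : int) : {poly rat} :=
  n`!%:R *: Atilde_gf r k n.

(* Substituting t = e^u - 1 turns t/((1+t)log(1+t)) into ((e^u-1)/u) e^(-u), so by
   Lagrange inversion the coefficient of t^a in its r-th power is the coefficient of
   u^a in e^((1-r)u) (u/(e^u-1))^(a+1-r), i.e. B_a^(a-r+1)(1-r)/a!. The coefficient of
   t^m in (1+t)^x is x(x-1)...(x-m+1)/m!, whose x^j-coefficient is S_1(m,j)/m!.
   Collecting x^j in the product of the three exponential generating functions
   gives the triple sum. Power series are handled through their truncations, as
   polynomials compared modulo X^N. *)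

From mathcomp Require Import all_boot all_order all_algebra.
From mathcomp Require Import ring zify.
Unset Printing Implicit Defensive.
Import Order.TTheory GRing.Theory Num.Theory.
Local Open Scope ring_scope.

Definition eqmodX {R : nzRingType} (N : nat) (p q : {poly R}) :=
  forall i, (i < N)%N -> p`_i = q`_i.

Notation "p = q %[modX N ]" := (eqmodX N p q)
  (at level 70, q at next level, format "p  =  q  %[modX  N ]").

Section CongruenceModX.
Context {R : nzRingType}.
Implicit Types p q s : {poly R}.

Lemma eqmodX_sym {N p q} : p = q %[modX N] -> q = p %[modX N].
Proof. by move=> h i hi; rewrite h. Qed.

Lemma eqmodX_trans {N p q s} : p = q %[modX N] -> q = s %[modX N] -> p = s %[modX N].
Proof. by move=> h1 h2 i hi; rewrite h1 // h2. Qed.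

Lemma eqmodX_le {M N p q} : (M <= N)%N -> p = q %[modX N] -> p = q %[modX M].
Proof. by move=> hMN h i hi; apply: h; exact: leq_trans hMN. Qed.

Lemma eqmodX_opp {N p p'} : p = p' %[modX N] -> - p = - p' %[modX N].
Proof. by move=> h i hi; rewrite !coefN h. Qed.

Lemma eqmodX_scale {N} c {p p'} : p = p' %[modX N] -> c *: p = c *: p' %[modX N].
Proof. by move=> h i hi; rewrite !coefZ h. Qed.

Lemma eqmodX_mul {N p p' q q'} :
  p = p' %[modX N] -> q = q' %[modX N] -> p * q = p' * q' %[modX N].
Proof.
move=> h1 h2 i hi; rewrite !coefM; apply: eq_bigr => j _.
rewrite h1 ?h2 //; first exact: leq_ltn_trans (leq_subr _ _) hi.
exact: leq_ltn_trans (ltnSE (ltn_ord j)) hi.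
Qed.

Lemma eqmodX_mull {N} p {q q'} : q = q' %[modX N] -> p * q = p * q' %[modX N].
Proof. exact: eqmodX_mul. Qed.

Lemma eqmodX_mulr {N p p'} q : p = p' %[modX N] -> p * q = p' * q %[modX N].
Proof. by move/eqmodX_mul; apply. Qed.

Lemma eqmodX_exp {N p p'} m : p = p' %[modX N] -> p ^+ m = p' ^+ m %[modX N].
Proof.
by move=> h; elim: m => [|m IH] //; rewrite !exprS; apply: eqmodX_mul.
Qed.

Lemma eqmodX_exp1 {N p} m : p = 1 %[modX N] -> p ^+ m = 1 %[modX N].
Proof. by move=> h; have := eqmodX_exp m h; rewrite expr1n. Qed.

Lemma eqmodX_sum {N I} (r : seq I) (P : pred I) {F G : I -> {poly R}} :
  (forall i, P i -> F i = G i %[modX N]) ->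
  \sum_(i <- r | P i) F i = \sum_(i <- r | P i) G i %[modX N].
Proof. by move=> h j hj; rewrite !coef_sum; apply: eq_bigr => i Pi; apply: h. Qed.

Lemma eqmodX_deriv {N p q} : p = q %[modX N.+1] -> p^`() = q^`() %[modX N].
Proof. by move=> h i hi; rewrite !coef_deriv h. Qed.

Lemma eqmodX_mulXlI {N p q} : 'X * p = 'X * q %[modX N.+1] -> p = q %[modX N].
Proof. by move=> h i hi; have := h i.+1 hi; rewrite !coefXM. Qed.

Lemma eqmodX_mulXn N n p : (N <= n)%N -> 'X^n * p = 0 %[modX N].
Proof. by move=> hn i hi; rewrite coefXnM coef0 (leq_trans hi hn). Qed.

End CongruenceModX.

Lemma eqmodX_deriv_inj {R : numDomainType} {N} {p q : {poly R}} :
  p^`() = q^`() %[modX N] -> p`_0 = q`_0 -> p = q %[modX N.+1].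
Proof.
move=> h h0 [|i] hi //; have /eqP := h i hi; rewrite !coef_deriv.
by rewrite -subr_eq0 -mulrnBl mulrn_eq0 /= subr_eq0 => /eqP.
Qed.

Section CompositionModX.
Context {R : comNzRingType}.
Implicit Types p q : {poly R}.

Lemma eqmodX_inv_unique {N p p' q} :
  p * q = 1 %[modX N] -> p' * q = 1 %[modX N] -> p = p' %[modX N].
Proof.
move=> hp hp'.
have e1 : p * 1 = p * (p' * q) %[modX N] by apply/eqmodX_mull/eqmodX_sym.
have e2 : p' * 1 = p' * (p * q) %[modX N] by apply/eqmodX_mull/eqmodX_sym.
rewrite mulr1 in e1; rewrite mulr1 in e2.
apply: (eqmodX_trans e1); apply: eqmodX_sym; apply: (eqmodX_trans e2).
by rewrite mulrCA.
Qed.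

Lemma const0_exp {q} m : q`_0 = 0 -> exists s, q ^+ m = 'X^m * s.
Proof.
move=> q0; exists (drop_poly 1 q ^+ m); rewrite -exprMn; congr (_ ^+ _).
rewrite -{1}(poly_take_drop 1 q) mulrC.
suff -> : take_poly 1 q = 0 by rewrite add0r.
by apply/polyP => -[|i]; rewrite coef_poly coef0.
Qed.

Lemma const0_coef_exp {q m i} : q`_0 = 0 -> (i < m)%N -> (q ^+ m)`_i = 0.
Proof. by move=> q0 hi; have [s ->] := const0_exp m q0; rewrite coefXnM hi. Qed.

Lemma eqmodX_compr {N} p {q q'} : q = q' %[modX N] -> p \Po q = p \Po q' %[modX N].
Proof.
by move=> h; rewrite !comp_polyE; apply: eqmodX_sum => i _; apply/eqmodX_scale/eqmodX_exp.
Qed.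

Lemma coef0_comp p {q} : q`_0 = 0 -> (p \Po q)`_0 = p`_0.
Proof.
move=> q0; have h : q = 0 %[modX 1] by case=> // _; rewrite coef0.
by rewrite (eqmodX_compr p h) // comp_poly0r coefC.
Qed.

(* Low coefficients of p \Po q only see those of p, since q ^+ m = O(X^m). *)
Lemma eqmodX_compl {N p p'} q :
  q`_0 = 0 -> p = p' %[modX N] -> p \Po q = p' \Po q %[modX N].
Proof.
move=> q0 h.
have hd : p - p' = 'X^N * drop_poly N (p - p').
  rewrite -{1}(poly_take_drop N (p - p')) mulrC.
  suff -> : take_poly N (p - p') = 0 by rewrite add0r.
  apply/polyP => i; rewrite coef_poly coef0 coefB.
  by case: ifP => // hi; rewrite h // subrr.
have [s hs] := const0_exp N q0.
have : (p - p') \Po q = 0 %[modX N].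
  by rewrite hd comp_polyM rmorphXn /= comp_polyX hs -mulrA; apply: eqmodX_mulXn.
by rewrite comp_polyB => h0 i hi; apply/eqP; rewrite -subr_eq0 -coefB h0 ?coef0.
Qed.

End CompositionModX.

Section Truncation.
Context {R : comNzRingType}.
Implicit Types f g : fps R.

Definition trunc N f : {poly R} := \poly_(i < N) f i.

Lemma coef_trunc N f i : (trunc N f)`_i = if (i < N)%N then f i else 0.
Proof. exact: coef_poly. Qed.

Lemma coef0_trunc N f : f 0%N = 0 -> (trunc N f)`_0 = 0.
Proof. by rewrite coef_trunc; case: N. Qed.

Lemma eqmodX_trunc N f (p : {poly R}) :
  (forall i, (i < N)%N -> f i = p`_i) -> trunc N f = p %[modX N].
Proof. by move=> h i hi; rewrite coef_trunc hi h. Qed.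

Lemma trunc_one N : trunc N (fps_one R) = 1 %[modX N].
Proof. by apply: eqmodX_trunc => -[|i] _; rewrite coefC. Qed.

Lemma trunc_mul N f g : trunc N (fps_mul f g) = trunc N f * trunc N g %[modX N].
Proof.
apply: eqmodX_trunc => i hi; rewrite coefM; apply: eq_bigr => j _.
rewrite !coef_trunc (leq_ltn_trans (leq_subr _ _) hi).
by rewrite (leq_ltn_trans (ltnSE (ltn_ord j)) hi).
Qed.

Lemma fps_powS f m : fps_pow f m.+1 = fps_mul f (fps_pow f m).
Proof. by []. Qed.

Lemma trunc_pow N f m : trunc N (fps_pow f m) = trunc N f ^+ m %[modX N].
Proof.
elim: m => [|m IH]; first exact: trunc_one.
by rewrite fps_powS exprS; apply: eqmodX_trans (trunc_mul N f _) (eqmodX_mull _ IH).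
Qed.

Lemma comp_trunc N f (q : {poly R}) : trunc N f \Po q = \sum_(m < N) f m *: q ^+ m.
Proof.
rewrite /trunc poly_def rmorph_sum /=; apply: eq_bigr => m _.
by rewrite comp_polyZ rmorphXn /= comp_polyX.
Qed.

Lemma trunc_comp N f g :
  g 0%N = 0 -> trunc N (fps_comp f g) = trunc N f \Po trunc N g %[modX N].
Proof.
move=> g0; apply: eqmodX_trunc => i hi; rewrite comp_trunc coef_sum.
rewrite /fps_comp (big_ord_widen N (fun m => f m * fps_pow g m i) hi) big_mkcond /=.
apply: eq_bigr => m _; rewrite coefZ; case: ltnP => hm.
  by rewrite -(trunc_pow N g m i hi) coef_trunc hi.
by rewrite const0_coef_exp ?mulr0 ?coef0_trunc.
Qed.

Lemma trunc_inv1 N f : f 0%N = 1 -> trunc N (fps_inv1 f) * trunc N f = 1 %[modX N].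
Proof.
move=> f0; case: N => [|N] //.
set u := trunc N.+1 (fun n => if n == 0%N then 0 else f n).
have u0 : u`_0 = 0 by rewrite coef0_trunc.
have -> : trunc N.+1 f = 1 + u.
  by apply/polyP => -[|i]; rewrite coefD !coef_trunc coefC //= ?f0 ?addr0 ?add0r.
set A := trunc N.+1 (fun m => (-1) ^+ m : R).
have hA : A * (1 + 'X) = 1 %[modX N.+1].
  move=> [|i] hi; rewrite mulrDr mulr1 coefD coefMX !coef_trunc hi coefC /=.
    by rewrite addr0.
  by rewrite (ltnW hi) exprS mulN1r addNr.
apply: eqmodX_trans (eqmodX_mulr _ (trunc_comp _ _ _ _)) _ => //.
have -> : (A \Po u) * (1 + u) = (A * (1 + 'X)) \Po u.
  by rewrite comp_polyM comp_polyD comp_polyX rmorph1.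
by have := eqmodX_compl u u0 hA; rewrite rmorph1.
Qed.

End Truncation.

Lemma natr_fact_neq0 {R : numDomainType} n : (n`!%:R : R) != 0.
Proof. by rewrite pnatr_eq0 -lt0n fact_gt0. Qed.

Definition exp_fps (c : rat) : fps rat := fun n => c ^+ n / n`!%:R.

Lemma exp_fps_mul c d n : fps_mul (exp_fps c) (exp_fps d) n = exp_fps (c + d) n.
Proof.
rewrite /fps_mul /exp_fps addrC exprDn mulr_suml; apply: eq_bigr => -[i hi] _ /=.
have hf : (n`!%:R : rat) = 'C(n, i)%:R * (i`!%:R * (n - i)`!%:R).
  by rewrite -!natrM bin_fact.
have hC : ('C(n, i)%:R : rat) != 0 by rewrite pnatr_eq0 -lt0n bin_gt0.
have fi := natr_fact_neq0 i; have fni := natr_fact_neq0 (n - i).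
by rewrite hf -mulr_natr; field; rewrite fi fni hC.
Qed.

Lemma exp_fps0 n : exp_fps 0 n = fps_one rat n.
Proof. by case: n => [|n]; rewrite /exp_fps ?expr0 ?divr1 // expr0n mul0r. Qed.

Definition log1p_div_t : fps rat := fun n => (-1) ^+ n / n.+1%:R.

Section Substitution.
Variable N : nat.
Local Notation K := N.+1.

Definition texp c := trunc K (exp_fps c).
Definition texpm1_div := trunc K expm1_div_t.
Definition texpm1 : {poly rat} := 'X * texpm1_div.
Definition tbern := trunc K (fps_inv1 expm1_div_t).
Definition tlog1p_div := trunc K log1p_div_t.
Definition ttdiv_log := trunc K tdiv_log_gf.

Lemma texpD c d : texp c * texp d = texp (c + d) %[modX K].
Proof.
apply: eqmodX_trans (eqmodX_sym (trunc_mul K _ _)) _.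
by apply: eqmodX_trunc => i hi; rewrite exp_fps_mul coef_trunc hi.
Qed.

Lemma texp0 : texp 0 = 1 %[modX K].
Proof.
by apply: eqmodX_trans (trunc_one K) => i hi; rewrite !coef_trunc hi exp_fps0.
Qed.

Lemma texpMn c m : texp c ^+ m = texp (c *+ m) %[modX K].
Proof.
elim: m => [|m IH]; first exact: eqmodX_sym texp0.
by rewrite exprS mulrS; apply: eqmodX_trans (eqmodX_mull _ IH) (texpD _ _).
Qed.

Lemma coef0_texpm1 : texpm1`_0 = 0.
Proof. by rewrite coefXM. Qed.

Lemma texp1 : 1 + texpm1 = texp 1 %[modX K].
Proof.
move=> [|i] hi; rewrite coefD coefC coefXM !coef_trunc hi /exp_fps expr1n /=.
  by rewrite addr0 fact0 divr1.
by rewrite (ltnW hi) add0r div1r.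
Qed.

Lemma deriv_texpm1 : texpm1^`() = texp 1 %[modX K].
Proof.
move=> i hi; rewrite coef_deriv coefXM !coef_trunc hi /= /exp_fps /expm1_div_t expr1n.
have fi := natr_fact_neq0 (R := rat) i.
have hi1 : (1 + i%:R : rat) != 0 by rewrite addrC natr1 pnatr_eq0.
by rewrite -mulr_natr factS natrM; field; rewrite fi hi1.
Qed.

Lemma tbernK : tbern * texpm1_div = 1 %[modX K].
Proof. by apply: trunc_inv1; rewrite /expm1_div_t invr1. Qed.

Lemma deriv_log1p : ('X * tlog1p_div)^`() * (1 + 'X) = 1 %[modX K].
Proof.
have hd i : (i < K)%N -> ('X * tlog1p_div)^`()`_i = (-1) ^+ i.
  move=> hi; rewrite coef_deriv coefXM /= coef_trunc hi /log1p_div_t.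
  by rewrite -mulrnAr -[_ *+ i.+1]mulr_natl mulfV ?mulr1 // pnatr_eq0.
move=> [|i] hi; rewrite mulrDr mulr1 coefD coefMX coefC hd //=.
by rewrite hd ?(ltnW hi) // exprS mulN1r addNr.
Qed.

(* log(1 + (e^u - 1)) = u: both sides vanish at 0 and have derivative 1. *)
Lemma log1p_texpm1 : ('X * tlog1p_div) \Po texpm1 = 'X %[modX K].
Proof.
have hd : (('X * tlog1p_div) \Po texpm1)^`() = ('X)^`() %[modX K].
  rewrite deriv_comp derivX.
  apply: eqmodX_trans (eqmodX_mull _ (eqmodX_trans deriv_texpm1 (eqmodX_sym texp1))) _.
  have -> : (('X * tlog1p_div)^`() \Po texpm1) * (1 + texpm1) =
            (('X * tlog1p_div)^`() * (1 + 'X)) \Po texpm1.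
    by rewrite comp_polyM comp_polyD comp_polyX rmorph1.
  by have := eqmodX_compl texpm1 coef0_texpm1 deriv_log1p; rewrite rmorph1.
apply: eqmodX_le (eqmodX_deriv_inj hd _) => //.
by rewrite coef0_comp ?coef0_texpm1 // coefXM coefX.
Qed.

Lemma texpm1_div_log : texpm1_div * (tlog1p_div \Po texpm1) = 1 %[modX N].
Proof.
apply: eqmodX_mulXlI; rewrite mulr1 mulrA -[in 'X * texpm1_div]/texpm1.
by rewrite -[texpm1 in texpm1 * _]comp_polyX -comp_polyM; exact: log1p_texpm1.
Qed.

Lemma ttdiv_logK : ttdiv_log * ((1 + 'X) * tlog1p_div) = 1 %[modX K].
Proof.
pose M := fps_mul (fun n => (n <= 1)%N%:R) log1p_div_t.
have hM : trunc K M = (1 + 'X) * tlog1p_div %[modX K].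
  apply: eqmodX_trans (trunc_mul _ _ _) (eqmodX_mulr _ _).
  by move=> [|[|i]] hi; rewrite coef_trunc hi coefD coefC coefX ?addr0 ?add0r.
apply: eqmodX_trans (eqmodX_mull _ (eqmodX_sym hM)) _.
apply: trunc_inv1.
by rewrite /M /fps_mul big_ord1 /log1p_div_t /= mul1r expr0 divr1.
Qed.

(* At t = e^u - 1 we have 1 + t = e^u and log(1 + t)/t = u/(e^u - 1), so the inverse
   of (1 + t) log(1 + t)/t becomes ((e^u - 1)/u) e^(-u). *)
Lemma ttdiv_log_texpm1 : ttdiv_log \Po texpm1 = texpm1_div * texp (-1) %[modX N].
Proof.
set L := (1 + texpm1) * (tlog1p_div \Po texpm1).
apply: (eqmodX_inv_unique (q := L)).
  apply: eqmodX_le (leqnSn N) _.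
  have := eqmodX_compl texpm1 coef0_texpm1 ttdiv_logK.
  by rewrite rmorph1 !comp_polyM comp_polyD comp_polyX rmorph1.
have -> : texpm1_div * texp (-1) * L =
  (texpm1_div * (tlog1p_div \Po texpm1)) * (texp (-1) * (1 + texpm1)) by rewrite /L; ring.
rewrite -[X in eqmodX _ _ X]mulr1; apply: eqmodX_mul texpm1_div_log _.
apply: eqmodX_le (leqnSn N) _.
apply: eqmodX_trans (eqmodX_mull _ texp1) _.
by apply: eqmodX_trans (texpD _ _) _; rewrite addNr; exact: texp0.
Qed.

Lemma ttdiv_log_pow_texpm1 r :
  ttdiv_log ^+ r \Po texpm1 = texpm1_div ^+ r * texp (- r%:R) %[modX N].
Proof.
rewrite rmorphXn /=; apply: eqmodX_trans (eqmodX_exp r ttdiv_log_texpm1) _.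
rewrite exprMn; apply: eqmodX_mull; apply: eqmodX_le (leqnSn N) _.
by rewrite -mulNrn; exact: texpMn.
Qed.

End Substitution.

Lemma coef_exp_deriv {R : numDomainType} (p : {poly R}) d :
  (p ^+ d * p^`())`_d = (p ^+ d.+1)`_d.+1.
Proof.
have /eqP : (p ^+ d * p^`())`_d *+ d.+1 = (p ^+ d.+1)`_d.+1 *+ d.+1.
  by rewrite -coef_deriv deriv_exp /= mulrC coefMn.
by rewrite -subr_eq0 -mulrnBl mulrn_eq0 /= subr_eq0 => /eqP.
Qed.

Section LagrangeInversion.
Variable N : nat.
Local Notation K := N.+1.
Local Notation psi := (texpm1 N).
Local Notation E := (texpm1_div N).
Local Notation P := (tbern N).

Lemma tbern_mul_deriv : P * E^`() = - (P^`() * E) %[modX N].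
Proof.
move=> i hi; have := eqmodX_deriv (tbernK N) i hi.
by rewrite derivM -polyC1 derivC coefD coef0 coefN => /addr0_eq ->.
Qed.

(* The residue of psi'/psi^(c+1): for c > 0 it is that of a derivative, hence 0. *)
Lemma coef_tbern_pow_deriv c : (c < N)%N -> (P ^+ c.+1 * psi^`())`_c = (c == 0%N)%:R.
Proof.
move=> hc.
have -> : P ^+ c.+1 * psi^`() = P ^+ c * (P * E) + 'X * (P ^+ c.+1 * E^`()).
  by rewrite /texpm1 derivM derivX mul1r exprS; ring.
rewrite coefD coefXM (eqmodX_mull _ (tbernK N) c (leqW hc)) mulr1.
case: c hc => [|d] hd /=; first by rewrite expr0 coefC addr0.
have hE : P ^+ d.+2 * E^`() = - (P ^+ d * P^`()) %[modX N].
  have -> : P ^+ d.+2 * E^`() = P ^+ d.+1 * (P * E^`()) by rewrite exprS; ring.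
  apply: eqmodX_trans (eqmodX_mull _ tbern_mul_deriv) _.
  have -> : P ^+ d.+1 * - (P^`() * E) = - (P ^+ d * P^`() * (P * E)).
    by rewrite exprS; ring.
  apply: eqmodX_opp; rewrite -[X in eqmodX _ _ X]mulr1; apply: eqmodX_mull.
  exact: eqmodX_le (leqnSn N) (tbernK N).
by rewrite (hE d (ltnW hd)) coefN coef_exp_deriv subrr.
Qed.

Lemma lagrange_residue a b : (a.+1 < N)%N ->
  (psi ^+ b * psi^`() * P ^+ a.+1)`_a = (b == a)%:R.
Proof.
move=> ha; case: (ltnP a b) => hab.
  by rewrite /texpm1 exprMn -!mulrA coefXnM hab (gtn_eqF hab).
have [c def_a] : exists c, a = (c + b)%N by exists (a - b)%N; rewrite subnK.
subst a.
have hPE : psi ^+ b * P ^+ (c + b).+1 = 'X^b * P ^+ c.+1 %[modX K].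
  have -> : psi ^+ b * P ^+ (c + b).+1 = 'X^b * ((P * E) ^+ b * P ^+ c.+1).
    by rewrite /texpm1 -addSn exprD !exprMn; ring.
  apply: eqmodX_mull; rewrite -[X in eqmodX _ _ X]mul1r; apply: eqmodX_mulr.
  exact: eqmodX_exp1 (tbernK N).
rewrite mulrAC (eqmodX_mulr _ hPE (c + b)%N); last by lia.
rewrite -mulrA coefXnM ltnNge leq_addl addnK coef_tbern_pow_deriv; last by lia.
by rewrite -{1}[b]add0n eqn_add2r eq_sym.
Qed.

Lemma coef_comp_texpm1 (H : {poly rat}) a : (a.+1 < N)%N ->
  H`_a = ((H \Po psi) * psi^`() * P ^+ a.+1)`_a.
Proof.
move=> ha; rewrite comp_polyE !mulr_suml coef_sum.
under eq_bigr => b _ do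
  rewrite -!scalerAl coefZ lagrange_residue // eq_sym -coefXn -coefZ.
by rewrite -coef_sum -poly_def coefK.
Qed.

End LagrangeInversion.

Lemma coef_ttdiv_log_pow N r a : (a.+1 < N)%N ->
  (ttdiv_log N ^+ r)`_a =
  (texpm1_div N ^+ r * texp N (1 - r%:R) * tbern N ^+ a.+1)`_a.
Proof.
move=> ha; rewrite (coef_comp_texpm1 _ _ _ ha); apply: eqmodX_mulr (ltnW ha).
apply: eqmodX_trans
  (eqmodX_mul (ttdiv_log_pow_texpm1 N r) (eqmodX_le (leqnSn N) (deriv_texpm1 N))) _.
rewrite -mulrA; apply: eqmodX_mull.
by rewrite addrC; apply: eqmodX_le (leqnSn N) (texpD N _ _).
Qed.

Definition bern_pow (alpha : int) : fps rat :=
  match alpha with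
  | Posz m => fps_pow (fps_inv1 expm1_div_t) m
  | Negz m => fps_pow expm1_div_t m.+1
  end.

Lemma bern_gfE alpha x : bern_gf alpha x = fps_mul (bern_pow alpha) (exp_fps x).
Proof. by []. Qed.

Lemma texpm1_div_tbern_pow N m s :
  texpm1_div N ^+ m * tbern N ^+ s = trunc N.+1 (bern_pow (s%:Z - m%:Z)) %[modX N.+1].
Proof.
have EP1 n : (texpm1_div N * tbern N) ^+ n = 1 %[modX N.+1].
  by apply: eqmodX_exp1; rewrite mulrC; exact: tbernK.
apply: eqmodX_sym; case: (leqP m s) => hms.
  have [d ->] : exists d, s = (d + m)%N by exists (s - m)%N; rewrite subnK.
  have -> : (d + m)%:Z - m%:Z = d by rewrite PoszD addrK.
  apply: eqmodX_trans (trunc_pow _ _ _) _.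
  rewrite exprD mulrCA -exprMn -[X in eqmodX _ X _]mulr1.
  exact: eqmodX_mull (eqmodX_sym (EP1 m)).
have [d ->] : exists d, m = (d.+1 + s)%N by exists (m - s).-1; lia.
have -> : s%:Z - (d.+1 + s)%:Z = Negz d by rewrite NegzE; lia.
apply: eqmodX_trans (trunc_pow _ _ _) _.
rewrite exprD -mulrA -exprMn -[X in eqmodX _ X _]mulr1.
exact: eqmodX_mull (eqmodX_sym (EP1 s)).
Qed.

Lemma coef_fps_pow_tdiv_log r a :
  fps_pow tdiv_log_gf r a = bernoulliB a (a%:Z - r%:Z + 1) (1 - r%:R) / a`!%:R.
Proof.
pose N := a.+2; have haN : (a < N.+1)%N by rewrite ltnW.
rewrite /bernoulliB mulrC mulKf ?natr_fact_neq0 // bern_gfE.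
have -> : a%:Z - r%:Z + 1 = a.+1%:Z - r%:Z by lia.
transitivity ((trunc N.+1 (fps_pow tdiv_log_gf r))`_a); first by rewrite coef_trunc haN.
rewrite (trunc_pow N.+1 _ r a haN) (coef_ttdiv_log_pow N) // mulrAC.
rewrite (eqmodX_mulr _ (texpm1_div_tbern_pow N r a.+1) a haN).
by rewrite -(trunc_mul N.+1 _ _ a haN) coef_trunc haN.
Qed.

(* Series in t with coefficients in {poly rat}: the inner 'X is x, the outer one t. *)
Definition xlog1p : fps {poly rat} := fun n => 'X * (log1p n)%:P.

Lemma xlog1p0 : xlog1p 0%N = 0.
Proof. by rewrite /xlog1p /log1p /= mulr0. Qed.

Section BinomialSeries.
Variable N : nat.
Local Notation K := N.+1.
Local Notation x := ('X : {poly rat}).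

Definition texpX : {poly {poly rat}} := trunc K (fun n => ((n`!%:R : rat)^-1)%:P).
Definition tpowX : {poly {poly rat}} := texpX \Po trunc K xlog1p.

Lemma coef0_trunc_xlog1p : (trunc K xlog1p)`_0 = 0.
Proof. exact: coef0_trunc xlog1p0. Qed.

Lemma deriv_texpX : texpX^`() = texpX %[modX N].
Proof.
move=> i hi; rewrite coef_deriv !coef_trunc !ltnS hi (ltnW hi) -polyCMn; congr _%:P.
have fi := natr_fact_neq0 (R := rat) i.
have hi1 : (1 + i%:R : rat) != 0 by rewrite addrC natr1 pnatr_eq0.
by rewrite -mulr_natr factS natrM; field; rewrite fi hi1.
Qed.

Lemma deriv_tlog1pX : (trunc K xlog1p)^`() * (1 + 'X) = x%:P %[modX N].
Proof.
have hd i : (i < N)%N -> (trunc K xlog1p)^`()`_i = x * ((-1) ^+ i)%:P.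
  move=> hi; rewrite coef_deriv coef_trunc ltnS hi /xlog1p /log1p /= -mulrnAr -polyCMn.
  congr (_ * _%:P); rewrite -mulrnAr -[_ *+ i.+1]mulr_natl mulfV ?pnatr_eq0 //.
  by rewrite mulr1 !exprS !mulN1r opprK.
move=> [|i] hi; rewrite mulrDr mulr1 coefD coefMX coefC hd //=.
  by rewrite addr0 expr0 polyC1 mulr1.
by rewrite hd ?(ltnW hi) // exprS mulN1r polyCN mulrN addNr.
Qed.

Lemma tpowX_ode : tpowX^`() * (1 + 'X) = tpowX * x%:P %[modX N].
Proof.
rewrite /tpowX deriv_comp -mulrA; apply: eqmodX_mul deriv_tlog1pX.
exact: eqmodX_compl coef0_trunc_xlog1p deriv_texpX.
Qed.

Lemma coef_tpowX i : (i < K)%N ->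
  i`!%:R *: tpowX`_i = \prod_(j < i) (x - j%:R%:P).
Proof.
elim: i => [|i IH] hi.
  by rewrite big_ord0 coef0_comp ?coef0_trunc_xlog1p // coef_trunc /= invr1 scale1r.
have rec : tpowX`_i.+1 *+ i.+1 = tpowX`_i * (x - i%:R%:P).
  have := tpowX_ode i hi; rewrite mulrDr mulr1 coefD coefMX coefMC coef_deriv.
  case: i {IH hi} => [|i] /= e; first by rewrite polyC0 subr0 -e addr0.
  by rewrite mulrBr -e coef_deriv polyC_natr mulr_natr addrK.
rewrite big_ord_recr /= -IH ?(ltnW hi) // -scalerAl -rec factS natrM mulrC.
by rewrite -scalerA; congr (_ *: _); exact: scaler_nat.
Qed.

End BinomialSeries.

Lemma coef_onept_pow_x m j : (onept_pow_x m)`_j = S1 m j / m`!%:R.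
Proof.
have -> : onept_pow_x m = (tpowX m)`_m.
  have := trunc_comp m.+1 (fun n => ((n`!%:R : rat)^-1)%:P) _ xlog1p0 m (ltnSn m).
  by rewrite coef_trunc ltnSn => h; exact: h.
by rewrite /S1 -(coef_tpowX m m) // coefZ mulrC mulKf ?natr_fact_neq0.
Qed.

Lemma S1_small m j : (m < j)%N -> S1 m j = 0.
Proof.
move=> hmj; rewrite /S1 nth_default // size_prod_XsubC.
suff -> : size (index_enum 'I_m) = m by [].
by rewrite -[RHS](card_ord m) cardT enumT.
Qed.

Lemma coef_cauchy2_gf k b : cauchy2_gf k b = C2 k b / b`!%:R.
Proof. by rewrite /C2 [_ * cauchy2_gf _ _]mulrC mulfK ?natr_fact_neq0. Qed.

Lemma coef_Atilde n r k j : (Atilde n r k)`_j =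
  n`!%:R * \sum_(i < n.+1)
    (\sum_(a < i.+1) bernoulliB a (a%:Z - r%:Z + 1) (1 - r%:R) / a`!%:R
                     * (C2 k (i - a) / (i - a)`!%:R))
    * (S1 (n - i) j / (n - i)`!%:R).
Proof.
rewrite /Atilde coefZ /Atilde_gf /fps_mul coef_sum; congr (_ * _).
apply: eq_bigr => i _; rewrite coefCM coef_onept_pow_x; congr (_ * _).
by apply: eq_bigr => a _; rewrite coef_fps_pow_tdiv_log coef_cauchy2_gf.
Qed.

Lemma bin_mul_factE n m a : (m <= n)%N -> (a <= n - m)%N ->
  n`!%:R / (a`!%:R * (n - m - a)`!%:R * m`!%:R) = ('C(n, m) * 'C(n - m, a))%:R :> rat.
Proof.
move=> hm ha.
have -> : n`! = ('C(n, m) * 'C(n - m, a) * (a`! * (n - m - a)`! * m`!))%N.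
  by rewrite -(bin_fact hm) -(bin_fact ha); ring.
by rewrite !natrM mulfK // !mulf_neq0 ?natr_fact_neq0.
Qed.

Lemma egf_convolution3 n j (B C s : nat -> rat) : (j <= n)%N ->
  (forall m, (m < j)%N -> s m = 0) ->
  n`!%:R * \sum_(i < n.+1)
    (\sum_(a < i.+1) B a / a`!%:R * (C (i - a)%N / (i - a)`!%:R))
    * (s (n - i)%N / (n - i)`!%:R)
  = \sum_(l < (n - j).+1) \sum_(a < (n - j - l).+1)
      ('C(n, l + j) * 'C(n - j - l, a))%:R * s (l + j)%N * B a * C (n - j - l - a)%N.
Proof.
move=> hjn s_small.
pose G m := \sum_(a < (n - m).+1)
  ('C(n, m) * 'C(n - m, a))%:R * s m * B a * C (n - m - a)%N.
transitivity (\sum_(m < n.+1) G m).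
  rewrite mulr_sumr (reindex_inj rev_ord_inj); apply: eq_bigr => -[m hm] _ /=.
  rewrite subSS subKn // mulr_suml mulr_sumr; apply: eq_bigr => -[a ha] _ /=.
  rewrite -bin_mul_factE //.
  have fa := natr_fact_neq0 (R := rat) a.
  have fb := natr_fact_neq0 (R := rat) (n - m - a).
  have fm := natr_fact_neq0 (R := rat) m.
  by field; rewrite fa fb fm.
rewrite -(big_mkord xpredT G) (big_cat_nat (leq0n j) (leqW hjn)) /=.
rewrite [X in X + _]big_nat_cond big1 ?add0r.
  rewrite -{1}(add0n j) big_addn subSn // big_mkord.
  by apply: eq_bigr => l _; rewrite /G addnC subnDA.
move=> m /andP[/andP[_ hm] _]; rewrite /G big1 // => a _.
by rewrite s_small // mulr0 !mul0r.
Qed.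

(* Indexing c by ordinals lets the lemma rewrite sums whose summand uses the index
   as a nat. *)
Lemma coef_sum_polyCXn {R : nzRingType} n (c : 'I_n.+1 -> R) j :
  (\sum_(i < n.+1) (c i)%:P * 'X^i)`_j = if (j <= n)%N then c (inord j) else 0.
Proof.
have -> : \sum_(i < n.+1) (c i)%:P * 'X^i = \poly_(i < n.+1) c (inord i).
  by rewrite poly_def; apply: eq_bigr => i _; rewrite inord_val mul_polyC.
by rewrite coef_poly ltnS.
Qed.

Theorem theorem3 (n r : nat) (k : int) :
  Atilde n r k =
  \sum_(j < n.+1)
    (\sum_(l < (n - j).+1) \sum_(a < (n - j - l).+1)
        ('C(n, l + j) * 'C(n - j - l, a))%:R * S1 (l + j) j
        * bernoulliB a (a%:Z - r%:Z + 1) (1 - r%:R)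
        * C2 k (n - j - l - a))%:P * 'X^j.
Proof.
apply/polyP => j; rewrite coef_sum_polyCXn coef_Atilde; case: leqP => hj.
  rewrite inordK //; apply: (egf_convolution3 n j
    (fun a => bernoulliB a (a%:Z - r%:Z + 1) (1 - r%:R)) (C2 k) (S1^~ j)) => //.
  by move=> m; apply: S1_small.
rewrite big1 ?mulr0 // => i _; rewrite S1_small ?mul0r ?mulr0 //.
by rewrite (leq_ltn_trans (leq_subr _ _) hj).
Qed.
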